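(* In the setting of the context, let $(h_1',h_2')\in\mathbb C(s)^2$ be a nonzero pair with $\widetilde\gamma_1h_1'+\widetilde\gamma_2h_2'=0$, $(h_1')^{\iota_1}=\pm h_1'$ and $(h_2')^{\iota_2}=\pm h_2'$. If $(h_1')^{\iota_1}=h_1'$ or $(h_2')^{\iota_2}=h_2'$, then the only pair $(h_1,h_2)\in\mathbb C(s)^2$ with $\widetilde\gamma_1h_1+\widetilde\gamma_2h_2=0$, $h_1^{\iota_1}=-h_1$ and $h_2^{\iota_2}=-h_2$ is $(0,0)$.
   Context: For a genus-zero weighted quadrant walk model (step set one of the five genus-zero sets, step weights $d_{i,j}>0$, Boltzmann weights $a,b>0$), $A=1-1/a$, $B=1-1/b$; $s\mapsto(x(s),y(s))$ is a fixed rational parametrization by $\mathbb P^1$ of the kernel curve (for a fixed real $t$ transcendental over $\mathbb Q((d_{i,j}),a,b)$), with $x(1/s)=x(s)$, $y(q/s)=y(s)$ for a fixed real $q$ not a root of unity. $\iota_1(s)=1/s$, $\iota_2(s)=q/s$, $\sigma=\iota_2\circ\iota_1$, $h^\tau=h\circ\tau$. It is known that the only elements of $\mathbb C(s)$ fixed by both $\iota_1$ and $\iota_2$ (equivalently by $\sigma$) are the constants. $\widetilde\gamma_1=A/x(s)-td_{1,-1}/y(s)$, $\widetilde\gamma_2=B/y(s)-td_{-1,1}/x(s)$. *)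

From HB Require Import structures.
From mathcomp Require Import all_boot all_order all_algebra.
From mathcomp Require Import complex.
From mathcomp Require Import reals.
Set Implicit Arguments. Unset Strict Implicit. Unset Printing Implicit Defensive.
Import Order.TTheory GRing.Theory Num.Theory.
Local Open Scope ring_scope.

Definition field_closed (F : fieldType) (S : F -> Prop) : Prop :=
  [/\ S 1,
      (forall u v, S u -> S v -> S (u - v)),
      (forall u v, S u -> S v -> S (u * v)) &
      (forall u, S u -> S u^-1)].

Definition in_gen_field (F : fieldType) (G : F -> Prop) (z : F) : Prop :=
  forall S : F -> Prop, field_closed S -> (forall u, G u -> S u) -> S z.

Definition transcendental_over (F : fieldType) (G : F -> Prop) (z : F) : Prop :=
  forall p : {poly F}, p != 0 -> (forall i, in_gen_field G p`_i) -> p.[z] != 0.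

Section RatFun.
Variable R : realType.
Local Notation C := R[i].
Definition ratfun := {fraction {poly C}}.

Definition rcst (c : C) : ratfun := FracField.tofrac (c%:P).
Definition rreal (r : R) : ratfun := rcst (r%:C)%C.
Definition svar : ratfun := FracField.tofrac 'X.

Definition peval (p : {poly C}) (r : ratfun) : ratfun :=
  (map_poly rcst p).[r].
Definition rcomp (f r : ratfun) : ratfun :=
  peval (\n_(repr f)) r / peval (\d_(repr f)) r.

Definition iota1 (h : ratfun) : ratfun := rcomp h (svar^-1).
Definition iota2 (q : R) (h : ratfun) : ratfun := rcomp h (rreal q / svar).

Definition is_const (h : ratfun) : Prop := exists c : C, h = rcst c.
End RatFun.

(* Weights are indexed by 'I_3 x 'I_3 with the convention
   d_{i,j} = d (i+1) (j+1) for i, j in {-1,0,1}; a step is absent iff its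
   weight is 0. *)
Definition dw (R : realType) (d : 'I_3 -> 'I_3 -> R) (i j : nat) : R :=
  d (inord i) (inord j).

(* genus-zero weighted step sets: steps (1,-1) and (-1,1) present, no step
   (0,0), and all the steps of one of the corners {(1,1),(1,0),(0,1)} or
   {(-1,-1),(-1,0),(0,-1)} absent, with at least one step of the opposite
   corner present. *)
Definition genus_zero_weights (R : realType) (d : 'I_3 -> 'I_3 -> R) : Prop :=
  [/\ forall i j, 0 <= d i j,
      0 < dw d 2 0, 0 < dw d 0 2, dw d 1 1 = 0 &
      ([/\ dw d 2 2 = 0, dw d 2 1 = 0, dw d 1 2 = 0 &
           (0 < dw d 0 0 \/ 0 < dw d 0 1 \/ 0 < dw d 1 0)]
       \/
       [/\ dw d 0 0 = 0, dw d 0 1 = 0, dw d 1 0 = 0 &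
           (0 < dw d 2 2 \/ 0 < dw d 2 1 \/ 0 < dw d 1 2)])].

(* K(x,y) = x y (1 - t S(x,y)) = x y - t * sum_{i,j} d_{i,j} x^{i+1} y^{j+1} *)
Definition kernel (R : realType) (d : 'I_3 -> 'I_3 -> R) (t : R)
  (x y : ratfun R) : ratfun R :=
  x * y - rreal t * \sum_(i < 3) \sum_(j < 3) rreal (d i j) * x ^+ i * y ^+ j.

(* (x(s), y(s)) is a rational parametrization by P^1 of the kernel curve:
   it lies on the curve, x and y are nonconstant, and it is birational,
   i.e. C(x(s), y(s)) = C(s). *)
Definition kernel_param (R : realType) (d : 'I_3 -> 'I_3 -> R) (t : R)
  (x y : ratfun R) : Prop :=
  [/\ kernel d t x y = 0, ~ is_const x, ~ is_const y &
      in_gen_field (fun u => is_const u \/ u = x \/ u = y) (svar R)].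

Definition gamma1 (R : realType) (d : 'I_3 -> 'I_3 -> R) (a t : R)
  (x y : ratfun R) : ratfun R :=
  rreal (1 - a^-1) / x - rreal (t * dw d 2 0) / y.
Definition gamma2 (R : realType) (d : 'I_3 -> 'I_3 -> R) (b t : R)
  (x y : ratfun R) : ratfun R :=
  rreal (1 - b^-1) / y - rreal (t * dw d 0 2) / x.

Definition not_root_of_unity (R : realType) (q : R) : Prop :=
  forall n : nat, (0 < n)%N -> q ^+ n != 1.

From HB Require Import structures.
From mathcomp Require Import all_boot all_order all_algebra generic_quotient.
From mathcomp Require Import complex.
From mathcomp Require Import reals.
From mathcomp Require Import ring zify.
Set Implicit Arguments. Unset Strict Implicit. Unset Printing Implicit Defensive.
Import Order.TTheory GRing.Theory Num.Theory.
Local Open Scope ring_scope.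

(** Since both [ι1] and [ι2] fix the constants and are field
  automorphisms, [γ1] and [γ2] are nonzero: e.g. [γ1 = 0] would make [y] a
  constant multiple of [x], hence fixed by both involutions, hence constant.
  Two solutions of [γ1 h1 + γ2 h2 = 0] are then proportional,
  [(h1, h2) = f (h1', h2')] with [f = h1 / h1'].  The signs force
  [f^ι1 = ± f] and [f^ι2 = ± f], so [f^2] is fixed by both involutions and
  [f] is constant.  If, say, [h1'^ι1 = h1'], then [-h1 = h1^ι1 = f h1' = h1],
  so [h1 = 0] and [f = 0]. *)

Section Substitution.
Variable R : realType.
Local Notation C := R[i].
Local Notation F := (ratfun R).
Local Notation tofrac := (@FracField.tofrac {poly C}).

Lemma ratfun_numden (f : F) : f = tofrac \n_(repr f) / tofrac \d_(repr f).
Proof.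
have d0 : tofrac \d_(repr f) != 0 by rewrite tofrac_eq0 denom_ratioP.
apply: (mulIf d0); rewrite divfK // -{1}[f]reprK.
unlock FracField.tofrac; rewrite -[_ * _]/(FracField.mul _ _) -FracField.pi_mul.
apply/eqmodP; rewrite /= FracField.equivfE /FracField.mulf.
by rewrite !numden_Ratio ?mulf_neq0 ?denom_ratioP ?oner_eq0 // !mulr1 mulrC.
Qed.

Lemma rcstE : @rcst R = tofrac \o polyC.
Proof. by []. Qed.

Lemma rcst_inj : injective (@rcst R).
Proof. by move=> c c' /eqP; rewrite tofrac_eq => /eqP/polyC_inj. Qed.

Lemma rcst0 : rcst 0 = 0 :> F.
Proof. by rewrite /rcst tofrac0. Qed.

Lemma rcstM (c c' : C) : rcst (c * c') = rcst c * rcst c'.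
Proof. by rewrite /rcst polyCM tofracM. Qed.

Lemma rcstN (c : C) : rcst (- c) = - rcst c.
Proof. by rewrite /rcst polyCN tofracN. Qed.

Lemma rcst_nat (n : nat) : rcst n%:R = n%:R :> F.
Proof. by rewrite /rcst polyC_natr rmorph_nat. Qed.

Lemma svar_neq0 : svar R != 0.
Proof. by rewrite tofrac_eq0 polyX_eq0. Qed.

Lemma pevalM (p p' : {poly C}) (r : F) :
  peval (p * p') r = peval p r * peval p' r.
Proof. by rewrite /peval rcstE rmorphM hornerM. Qed.

Lemma peval_polyC (c : C) (r : F) : peval c%:P r = rcst c.
Proof. by rewrite /peval rcstE map_polyC hornerC. Qed.

Lemma peval_sum (p : {poly C}) (r : F) :
  peval p r = \sum_(i < size p) rcst p`_i * r ^+ i.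
Proof.
rewrite /peval rcstE (horner_coef_wide _ (eq_leq (size_map_poly _ _))).
by apply: eq_bigr => i _; rewrite coef_map.
Qed.

(* Substituting such an [r] never sends a nonzero denominator to [0], which
   makes [rcomp _ r] a field morphism. *)
Definition transcendental (r : F) := forall p, peval p r = 0 -> p = 0.

(* [s^(n+1) p(c/s)] is the polynomial [sum_i p_i c^i s^(n+1-i)], whose
   coefficient of [s] is [p_n c^n]. *)
Lemma transcendental_cst_div_svar (c : C) : c != 0 ->
  transcendental (rcst c / svar R).
Proof.
move=> c0 p; apply: contra_eq => p0; rewrite peval_sum.
have [n sp] : exists n, size p = n.+1.
  by exists (size p).-1; rewrite prednK // size_poly_gt0.
rewrite sp; pose Q := \sum_(i < n.+1) (p`_i * c ^+ i) *: 'X^(n.+1 - i).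
have s0 : svar R ^+ n.+1 != 0 := expf_neq0 _ svar_neq0.
have -> : \sum_(i < n.+1) rcst p`_i * (rcst c / svar R) ^+ i
          = tofrac Q / svar R ^+ n.+1.
  apply: (mulIf s0); rewrite divfK // mulr_suml rmorph_sum.
  apply: eq_bigr => i _.
  rewrite -mul_polyC !rmorphM !rmorphXn /= -/(svar R) /rcst.
  have -> : svar R ^+ n.+1 = svar R ^+ (n.+1 - i) * svar R ^+ i.
    by rewrite -exprD subnK // (ltnW (ltn_ord i)).
  have si0 : svar R ^+ i != 0 := expf_neq0 _ svar_neq0.
  rewrite expr_div_n; move: (svar R ^+ i) si0 => u u0.
  by rewrite [_ * u]mulrC mulrA -(mulrA _ _ u) divfK.
rewrite mulf_eq0 invr_eq0 (negPf s0) orbF tofrac_eq0.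
apply: contraNN p0 => /eqP Q0; have : Q`_1 = 0 by rewrite Q0 coef0.
rewrite coef_sumMXn (big_pred1 ord_max) => [/eqP|i /=].
  rewrite mulf_eq0 expf_eq0 (negPf c0) andbF orbF.
  by rewrite -lead_coef_eq0 lead_coefE sp.
apply/eqP/eqP => [|-> /=]; last by lia.
by move=> h; apply: val_inj => /=; have := ltn_ord i; lia.
Qed.

Section Composition.
Variables (r : F) (r_tr : transcendental r).

Lemma peval_neq0 (p : {poly C}) : p != 0 -> peval p r != 0.
Proof. by apply: contra => /eqP /r_tr ->. Qed.

Lemma rcomp_tofrac (n d : {poly C}) : d != 0 ->
  rcomp (tofrac n / tofrac d) r = peval n r / peval d r.
Proof.
move=> d0; rewrite /rcomp; set f := tofrac n / tofrac d.
have := ratfun_numden f; have := denom_ratioP (repr f).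
move: \n_(repr f) \d_(repr f) => n' d' d'0 ef.
have cross : n' * d = n * d'.
  apply/eqP; rewrite -tofrac_eq !tofracM; apply/eqP.
  by move: ef; rewrite /f => /eqP; rewrite eqr_div ?tofrac_eq0 // => /eqP <-.
by apply/eqP; rewrite eqr_div ?peval_neq0 // -!pevalM cross.
Qed.

Lemma rcompM : {morph (@rcomp R)^~ r : f g / f * g}.
Proof.
move=> f g; rewrite [f in LHS]ratfun_numden [g in LHS]ratfun_numden.
rewrite mulf_div -!tofracM rcomp_tofrac ?mulf_neq0 ?denom_ratioP //.
by rewrite !pevalM -mulf_div -!rcomp_tofrac ?denom_ratioP // -!ratfun_numden.
Qed.

Lemma rcomp0 : rcomp 0 r = 0.
Proof.
rewrite {1}(_ : 0 = tofrac 0 / tofrac 1) ?rcomp_tofrac ?oner_eq0 //.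
  by rewrite /peval map_poly0 horner0 mul0r.
by rewrite tofrac0 mul0r.
Qed.

Lemma rcompV : {morph (@rcomp R)^~ r : f / f^-1}.
Proof.
move=> f; have [->|f0] := eqVneq f 0; first by rewrite invr0 rcomp0 invr0.
have n0 : \n_(repr f) != 0.
  by apply: contra_neq f0 => n0; rewrite [f]ratfun_numden n0 tofrac0 mul0r.
rewrite [f in LHS]ratfun_numden invf_div rcomp_tofrac // invf_div.
by rewrite -rcomp_tofrac ?denom_ratioP // -ratfun_numden.
Qed.

Lemma rcomp_cst (c : C) : rcomp (rcst c) r = rcst c.
Proof.
rewrite -[rcst c]divr1 -tofrac1 rcomp_tofrac ?oner_eq0 //.
by rewrite -[1 : {poly C}]/(1%:P) !peval_polyC tofrac1 !divr1.
Qed.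

End Composition.

Lemma transcendental_inv_svar : transcendental (svar R)^-1.
Proof.
rewrite -div1r -[1 : F]tofrac1.
exact: transcendental_cst_div_svar (oner_neq0 _).
Qed.

Lemma transcendental_real_div_svar (q : R) : q != 0 ->
  transcendental (rreal q / svar R).
Proof.
by move=> q0; apply: transcendental_cst_div_svar; apply: contra q0 => /eqP [->].
Qed.

End Substitution.

Section FieldLemmas.
Variable K : fieldType.

Definition signed (p : K -> K) (f : K) := p f = f \/ p f = - f.

Lemma signed_div (p : K -> K) (u v : K) :
  {morph p : f g / f * g} -> {morph p : f / f^-1} ->
  signed p u -> signed p v -> signed p (u / v).
Proof.
move=> pM pV [] pu [] pv.
all: rewrite /signed pM pV pu pv ?invrN ?mulrN ?mulNr ?opprK.
all: by [left | right].
Qed.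

Lemma signed_sqr_fixed (p : K -> K) (f : K) :
  {morph p : f g / f * g} -> signed p f -> p (f ^+ 2) = f ^+ 2.
Proof. by move=> pM [] pf; rewrite expr2 pM pf ?mulrNN. Qed.

Lemma eq_opp_eq0 (f : K) : 2%:R != 0 :> K -> f = - f -> f = 0.
Proof.
move=> two_neq0 /eqP; rewrite -subr_eq0 opprK -mulr2n -mulr_natr.
by rewrite mulf_eq0 (negPf two_neq0) orbF => /eqP.
Qed.

Lemma cross_eq_of_solutions (g1 g2 h1 h2 h1' h2' : K) : g2 != 0 ->
  g1 * h1 + g2 * h2 = 0 -> g1 * h1' + g2 * h2' = 0 -> h2 * h1' = h1 * h2'.
Proof.
move=> g2_neq0 /eqP; rewrite addrC addr_eq0 => /eqP e.
move=> /eqP; rewrite addrC addr_eq0 => /eqP e'.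
by apply: (mulfI g2_neq0); rewrite mulrA e mulrCA e'; ring.
Qed.

Lemma div_sub_div_neq0 (cst : K -> Prop) (pa pb : K -> K) (c c' u v : K) :
  {morph pa : f g / f * g} -> {morph pa : f / f^-1} ->
  (forall f, cst f -> pa f = f) -> (forall f, pa f = f -> pb f = f -> cst f) ->
  cst c -> cst c' -> c' != 0 -> u != 0 -> v != 0 -> ~ cst v ->
  pa u = u -> pb v = v -> c / u - c' / v != 0.
Proof.
move=> paM paV pa_cst fixed_cst cc cc' c'0 u0 v0 ncv pu pv.
rewrite subr_eq0 eqr_div //; apply/eqP => cross.
have c0 : c != 0.
  by apply: contra_eq_neq cross => ->; rewrite mul0r eq_sym mulf_neq0.
have ev : v = c' / c * u by rewrite mulrAC -cross mulrC mulKf.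
apply: ncv; apply: fixed_cst pv.
by rewrite ev !paM paV (pa_cst _ cc) (pa_cst _ cc') pu.
Qed.

End FieldLemmas.

Section AntiInvariantSolutions.
Variables (K : fieldType) (cst : K -> Prop) (p1 p2 : K -> K).
Hypotheses (p1M : {morph p1 : f g / f * g}) (p1V : {morph p1 : f / f^-1}).
Hypotheses (p2M : {morph p2 : f g / f * g}) (p2V : {morph p2 : f / f^-1}).
Hypothesis cst_fixed : forall f, cst f -> p1 f = f /\ p2 f = f.
Hypothesis fixed_cst : forall f, p1 f = f -> p2 f = f -> cst f.
Hypothesis cst_sqr : forall f, cst (f ^+ 2) -> cst f.
Hypothesis two_neq0 : 2%:R != 0 :> K.

Lemma signed_cst (f : K) : signed p1 f -> signed p2 f -> cst f.
Proof.
by move=> f1 f2; apply/cst_sqr/fixed_cst; apply: signed_sqr_fixed.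
Qed.

Lemma anti_invariant_solution_eq0 (g1 g2 h1' h2' h1 h2 : K) :
  g1 != 0 -> g2 != 0 -> (h1', h2') != (0, 0) ->
  g1 * h1' + g2 * h2' = 0 -> signed p1 h1' -> signed p2 h2' ->
  p1 h1' = h1' \/ p2 h2' = h2' ->
  g1 * h1 + g2 * h2 = 0 -> p1 h1 = - h1 -> p2 h2 = - h2 -> h1 = 0 /\ h2 = 0.
Proof.
move=> g1_neq0 g2_neq0 nz e' s1 s2 fixed' e i1 i2.
have h1'0 : h1' != 0.
  apply: contraNneq nz => h1'0; move: e'; rewrite h1'0 mulr0 add0r => /eqP.
  by rewrite mulf_eq0 (negPf g2_neq0) => /eqP ->; rewrite eqxx.
have h2'0 : h2' != 0.
  apply: contraNneq nz => h2'0; move: e'; rewrite h2'0 mulr0 addr0 => /eqP.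
  by rewrite mulf_eq0 (negPf g1_neq0) => /eqP ->; rewrite eqxx.
pose f := h1 / h1'.
have fh1 : h1 = f * h1' by rewrite divfK.
have fh2 : h2 = f * h2'.
  by rewrite /f mulrAC -(cross_eq_of_solutions g2_neq0 e e') mulfK.
have f1 : signed p1 f by apply: signed_div => //; right.
have f2 : signed p2 f.
  have -> : f = h2 / h2' by rewrite fh2 mulfK.
  by apply: signed_div => //; right.
have [c1 c2] := cst_fixed (signed_cst f1 f2).
have f0 : f = 0.
  apply: (@eq_opp_eq0 K f two_neq0); case: fixed' => [fix1 | fix2].
    by move: i1; rewrite fh1 p1M fix1 c1 -mulNr => /(mulIf h1'0).
  by move: i2; rewrite fh2 p2M fix2 c2 -mulNr => /(mulIf h2'0).
by rewrite fh1 fh2 f0 !mul0r.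
Qed.

End AntiInvariantSolutions.

Lemma in_gen_field_bool (K : fieldType) (G : K -> Prop) (b : bool) :
  in_gen_field G b%:R.
Proof.
move=> S [S1 SB _ _] _; case: b => //=.
by have := SB 1 1 S1 S1; rewrite subrr.
Qed.

Lemma transcendental_over_neq0 (K : fieldType) (G : K -> Prop) (t : K) :
  transcendental_over G t -> t != 0.
Proof.
move=> t_tr; have := t_tr 'X (negbT (polyX_eq0 _)).
rewrite hornerX; apply=> i.
by rewrite coefX; apply: in_gen_field_bool.
Qed.

Section Involutions.
Variable R : realType.
Local Notation F := (ratfun R).

Lemma iota1M : {morph @iota1 R : f g / f * g}.
Proof. by move=> f g; exact: (rcompM (@transcendental_inv_svar R)). Qed.

Lemma iota1V : {morph @iota1 R : f / f^-1}.
Proof. by move=> f; exact: (rcompV (@transcendental_inv_svar R)). Qed.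

Lemma iota2M (q : R) : q != 0 -> {morph iota2 q : f g / f * g}.
Proof. by move=> q0 f g; exact: (rcompM (transcendental_real_div_svar q0)). Qed.

Lemma iota2V (q : R) : q != 0 -> {morph iota2 q : f / f^-1}.
Proof. by move=> q0 f; exact: (rcompV (transcendental_real_div_svar q0)). Qed.

Lemma iota1_cst (f : F) : is_const f -> iota1 f = f.
Proof. by move=> [c ->]; exact: (rcomp_cst (@transcendental_inv_svar R)). Qed.

Lemma iota2_cst (q : R) : q != 0 -> forall f : F, is_const f -> iota2 q f = f.
Proof.
by move=> q0 f [c ->]; exact: (rcomp_cst (transcendental_real_div_svar q0)).
Qed.

Lemma is_const_rreal (r : R) : is_const (rreal r).
Proof. by exists r%:C%C. Qed.

Lemma rreal_neq0 (r : R) : r != 0 -> rreal r != 0.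
Proof. by apply: contra => /eqP; rewrite -rcst0 => /rcst_inj [->]. Qed.

Lemma nonconst_neq0 (f : F) : ~ is_const f -> f != 0.
Proof. by apply: contra_not_neq => ->; exists 0; rewrite rcst0. Qed.

Lemma is_const_sqr (f : F) : is_const (f ^+ 2) -> is_const f.
Proof.
move=> [c fc]; have : (f - rcst (sqrtC c)) * (f + rcst (sqrtC c)) = 0.
  by rewrite -subr_sqr fc expr2 -rcstM -expr2 sqrtCK subrr.
move/eqP; rewrite mulf_eq0 => /orP [] /eqP f_eq.
  by exists (sqrtC c); apply/eqP; rewrite -subr_eq0 f_eq.
by exists (- sqrtC c); apply/eqP; rewrite rcstN -addr_eq0 f_eq.
Qed.

Lemma ratfun_two_neq0 : 2%:R != 0 :> F.
Proof.
by rewrite -rcst_nat -rcst0; apply/eqP => /rcst_inj/eqP; rewrite pnatr_eq0.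
Qed.

Section Gammas.
Variables (d : 'I_3 -> 'I_3 -> R) (a b t q : R) (x y : F).
Hypotheses (q0 : q != 0) (ncx : ~ is_const x) (ncy : ~ is_const y).
Hypotheses (ix : iota1 x = x) (iy : iota2 q y = y).
Hypothesis fixed_cst : forall f : F, iota1 f = f -> iota2 q f = f -> is_const f.

Lemma gamma1_neq0 : t * dw d 2 0 != 0 -> gamma1 d a t x y != 0.
Proof.
move=> td0; rewrite /gamma1.
apply: (div_sub_div_neq0 iota1M iota1V (@iota1_cst) fixed_cst).
all: by [| apply: is_const_rreal | apply: rreal_neq0 | apply: nonconst_neq0].
Qed.

Lemma gamma2_neq0 : t * dw d 0 2 != 0 -> gamma2 d b t x y != 0.
Proof.
move=> td0; rewrite /gamma2.
apply: (div_sub_div_neq0 (iota2M q0) (iota2V q0) (iota2_cst q0)).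
all: by [| move=> f /fixed_cst; apply | apply: is_const_rreal
  | apply: rreal_neq0 | apply: nonconst_neq0].
Qed.

End Gammas.
End Involutions.

Theorem lemma3p3 (R : realType) (d : 'I_3 -> 'I_3 -> R) (a b t q : R)
    (x y h1' h2' : ratfun R) :
  genus_zero_weights d ->
  0 < a -> 0 < b ->
  transcendental_over
    (fun u : R => (exists i j, u = d i j) \/ u = a \/ u = b) t ->
  q != 0 -> not_root_of_unity q ->
  kernel_param d t x y ->
  iota1 x = x -> iota2 q y = y ->
  (forall f : ratfun R, iota1 f = f -> iota2 q f = f -> is_const f) ->
  (h1', h2') != (0, 0) ->
  gamma1 d a t x y * h1' + gamma2 d b t x y * h2' = 0 ->
  (iota1 h1' = h1' \/ iota1 h1' = - h1') ->
  (iota2 q h2' = h2' \/ iota2 q h2' = - h2') ->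
  (iota1 h1' = h1' \/ iota2 q h2' = h2') ->
  forall h1 h2 : ratfun R,
    gamma1 d a t x y * h1 + gamma2 d b t x y * h2 = 0 ->
    iota1 h1 = - h1 -> iota2 q h2 = - h2 ->
    h1 = 0 /\ h2 = 0.
Proof.
move=> [_ d20 d02 _ _] _ _ t_tr q0 _ [_ ncx ncy _] ix iy fixed_cst.
have t0 := transcendental_over_neq0 t_tr.
have g10 : gamma1 d a t x y != 0.
  exact: gamma1_neq0 ncx ncy ix iy fixed_cst (mulf_neq0 t0 (lt0r_neq0 d20)).
have g20 : gamma2 d b t x y != 0.
  exact: gamma2_neq0 q0 ncx ncy ix iy fixed_cst (mulf_neq0 t0 (lt0r_neq0 d02)).
have cst_fixed (f : ratfun R) : is_const f -> iota1 f = f /\ iota2 q f = f.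
  by move=> cf; split; [apply: iota1_cst | apply: iota2_cst].
move=> nz e' s1 s2 fixed' h1 h2 e i1 i2.
exact: (anti_invariant_solution_eq0 (@iota1M R) (@iota1V R) (iota2M q0)
  (iota2V q0) cst_fixed fixed_cst (@is_const_sqr R) (@ratfun_two_neq0 R)
  g10 g20 nz e' s1 s2 fixed' e i1 i2).
Qed.
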